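(* Consider the single-task common ground mechanism (context), under the assumption that $X_A$ and $X_B$ are independent conditional on $Y$. Then truth-telling is a Bayesian Nash equilibrium; if moreover the prior is stable, truth-telling is a strict Bayesian Nash equilibrium (for every $x_A$, given that Bob is truthful, any report $\hat{\mathbf{p}}_{x_A}\ne\mathbf{p}_{x_A}$ yields Alice strictly smaller conditional expected payment, and symmetrically for Bob). Moreover, when both agents are truthful, each agent's expected payment equals the Shannon mutual information $I(X_A;X_B)=\sum_{x_A,x_B}\Pr[X_A=x_A,X_B=x_B]\log K(x_A,x_B)\ge 0$.
   Context: Let $\Sigma_A,\Sigma_B,\Sigma$ be finite nonempty sets and $(X_A,X_B,Y)$ random variables with values in $\Sigma_A\times\Sigma_B\times\Sigma$ (joint law = the prior), with all marginal probabilities positive. $\Delta_\Sigma$ is the set of probability vectors on $\Sigma$. $K(x_A,x_B):=\frac{\Pr[X_A=x_A,X_B=x_B]}{\Pr[X_A=x_A]\Pr[X_B=x_B]}$. Alice privately observes $X_A=x_A$, Bob observes $X_B=x_B$; their truthful reports are $\mathbf{p}_{x_A}:=(\Pr[Y=y\mid X_A=x_A])_y$ and $\mathbf{p}_{x_B}:=(\Pr[Y=y\mid X_B=x_B])_y$. A strategy maps the private signal to a (possibly random) report in $\Delta_\Sigma$. Common ground mechanism: given the prior $(\Pr[Y=y])_y$ and reports $\hat{\mathbf{p}}_{x_A},\hat{\mathbf{p}}_{x_B}$, both agents are paid $\log\sum_y\frac{\hat{\mathbf{p}}_{x_A}(y)\hat{\mathbf{p}}_{x_B}(y)}{\Pr[Y=y]}$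 (with $\log 0=-\infty$). Stable prior: consider the system in unknowns $\mathbf{a}^{x_A},\mathbf{b}^{x_B},\mathbf{r}\in\Delta_\Sigma$: $\sum_y a^{x_A}_yb^{x_B}_y/r_y=K(x_A,x_B)$ for all $(x_A,x_B)$. The prior is stable if, with $\mathbf{a}^{x_A}=\mathbf{p}_{x_A}$ for all $x_A$ and $\mathbf{r}=(\Pr[Y=y])_y$ fixed, the unique solution $\{\mathbf{b}^{x_B}\}$ is $\mathbf{b}^{x_B}=\mathbf{p}_{x_B}$, and with $\mathbf{b}^{x_B}=\mathbf{p}_{x_B}$ and $\mathbf{r}=(\Pr[Y=y])_y$ fixed, the unique solution $\{\mathbf{a}^{x_A}\}$ is $\mathbf{a}^{x_A}=\mathbf{p}_{x_A}$. *)

From Stdlib Require Import Reals.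
From mathcomp Require Import all_boot.
Set Implicit Arguments. Unset Strict Implicit. Unset Printing Implicit Defensive.

Local Open Scope R_scope.

Definition rsum (T : finType) (f : T -> R) : R := \big[Rplus/R0]_(t : T) f t.

(* Extended reals R ∪ {-oo}, needed since log 0 = -oo. *)
Inductive xreal := Fin (r : R) | MInf.

Definition xle (a b : xreal) : Prop :=
  match a, b with
  | MInf, _ => True
  | Fin _, MInf => False
  | Fin x, Fin y => x <= y
  end.

Definition xlt (a b : xreal) : Prop :=
  match a, b with
  | MInf, MInf => False
  | MInf, Fin _ => True
  | Fin _, MInf => False
  | Fin x, Fin y => x < y
  end.

Definition xadd (a b : xreal) : xreal :=
  match a, b with
  | Fin x, Fin y => Fin (x + y)
  | _, _ => MInf
  end.

(* nonnegative weight times extended real, with the convention 0 * (-oo) = 0 *)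
Definition xscale (w : R) (a : xreal) : xreal :=
  if Req_EM_T w 0 then Fin 0 else
  match a with Fin x => Fin (w * x) | MInf => MInf end.

Definition xsum (T : finType) (f : T -> xreal) : xreal :=
  \big[xadd/Fin 0]_(t : T) f t.

(* log with log 0 = -oo (applied to nonnegative arguments only) *)
Definition xlog (x : R) : xreal :=
  if Rlt_dec 0 x then Fin (ln x) else MInf.

Definition ProbVec (T : finType) (p : T -> R) : Prop :=
  (forall t, 0 <= p t) /\ rsum p = 1.

Section Model.
Variables (TA TB TY : finType) (P : TA -> TB -> TY -> R).

Definition is_prior : Prop :=
  (forall a b y, 0 <= P a b y) /\
  rsum (fun a => rsum (fun b => rsum (fun y => P a b y))) = 1.

Definition PA (a : TA) : R := rsum (fun b => rsum (fun y => P a b y)).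
Definition PB (b : TB) : R := rsum (fun a => rsum (fun y => P a b y)).
Definition PY (y : TY) : R := rsum (fun a => rsum (fun b => P a b y)).
Definition PAB (a : TA) (b : TB) : R := rsum (fun y => P a b y).
Definition PAY (a : TA) (y : TY) : R := rsum (fun b => P a b y).
Definition PBY (b : TB) (y : TY) : R := rsum (fun a => P a b y).

Definition positive_marginals : Prop :=
  (forall a, 0 < PA a) /\ (forall b, 0 < PB b) /\ (forall y, 0 < PY y).

Definition cond_indep : Prop :=
  forall a b y, P a b y * PY y = PAY a y * PBY b y.

Definition pA (a : TA) (y : TY) : R := PAY a y / PA a.
Definition pB (b : TB) (y : TY) : R := PBY b y / PB b.

Definition K (a : TA) (b : TB) : R := PAB a b / (PA a * PB b).

Definition score (qa qb : TY -> R) : R := rsum (fun y => qa y * qb y / PY y).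
Definition payment (qa qb : TY -> R) : xreal := xlog (score qa qb).

Definition ExpPayA (a : TA) (q : TY -> R) : xreal :=
  xsum (fun b => xscale (PAB a b / PA a) (payment q (pB b))).

Definition ExpPayB (b : TB) (q : TY -> R) : xreal :=
  xsum (fun a => xscale (PAB a b / PB b) (payment (pA a) q)).

Definition ExpPayTruthful : xreal :=
  xsum (fun a => xsum (fun b => xscale (PAB a b) (payment (pA a) (pB b)))).

(* Shannon mutual information I(X_A;X_B) (terms with PAB = 0 vanish) *)
Definition MI : R := rsum (fun a => rsum (fun b => PAB a b * ln (K a b))).

Definition stable : Prop :=
  ((forall a b, score (pA a) (pB b) = K a b) /\
   forall bb : TB -> TY -> R,
     (forall b, ProbVec (bb b)) ->
     (forall a b, score (pA a) (bb b) = K a b) ->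
     forall b, bb b = pB b) /\
  ((forall a b, score (pA a) (pB b) = K a b) /\
   forall aa : TA -> TY -> R,
     (forall a, ProbVec (aa a)) ->
     (forall a b, score (aa a) (pB b) = K a b) ->
     forall a, aa a = pA a).

End Model.

From Stdlib Require Import Reals Lra Classical.
From HB Require Import structures.
From mathcomp Require Import all_boot.
Set Implicit Arguments. Unset Strict Implicit. Unset Printing Implicit Defensive.
Local Open Scope R_scope.

(* Given X_A = a, Bob's truthful report p_b makes Alice's score against it a
   linear functional f_b(q) = score(q, p_b) with sum_b Pr[b] f_b(q) = sum_y q_y = 1,
   while truth-telling gives f_b = K(a,b) = Pr[b|a] / Pr[b] (this is where
   conditional independence enters).  Gibbs' inequality
   sum_b w_b log f_b <= sum_b w_b log (w_b / c_b) whenever sum_b c_b f_b <= sum_b w_b,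
   strict unless f = w / c, thus gives the equilibrium, and strictness as soon as
   some f_b(q) differs from K(a,b), which stability guarantees for q <> p_a.
   Bob's case is Alice's for the prior with the roles of X_A and X_B swapped.
   Finally the truthful payment is sum PAB log K = I(X_A;X_B), nonnegative by
   Gibbs' inequality once more. *)

HB.instance Definition _ := Monoid.isComLaw.Build R 0 Rplus
  (fun x y z => esym (Rplus_assoc x y z)) Rplus_comm Rplus_0_l.

Lemma xaddA : associative xadd.
Proof. by case=> [x|] [y|] [z|] //=; rewrite Rplus_assoc. Qed.

Lemma xaddC : commutative xadd.
Proof. by case=> [x|] [y|] //=; rewrite Rplus_comm. Qed.

Lemma xadd0 : left_id (Fin 0) xadd.
Proof. by case=> [x|] //=; rewrite Rplus_0_l. Qed.

HB.instance Definition _ := Monoid.isComLaw.Build xreal (Fin 0) xadd xaddA xaddC xadd0.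

Section FiniteSums.
Variable T : finType.
Implicit Types (f g : T -> R) (F : T -> xreal).

Lemma rsum_ge0 f : (forall t, 0 <= f t) -> 0 <= rsum f.
Proof. by move=> f_ge0; apply: big_ind => //; [lra | move=> *; lra]. Qed.

Lemma rsum_le f g : (forall t, f t <= g t) -> rsum f <= rsum g.
Proof. by move=> fg; apply: (big_ind2 Rle) => //; [lra | move=> *; lra]. Qed.

Lemma rsum_lt f g t0 : (forall t, f t <= g t) -> f t0 < g t0 -> rsum f < rsum g.
Proof.
move=> fg fg0; rewrite /rsum (bigD1 t0) //= [X in _ < X](bigD1 t0) //=.
by apply: Rplus_lt_le_compat => //; apply: (big_ind2 Rle) => //; [lra | move=> *; lra].
Qed.

Lemma rsum_mulr f k : rsum (fun t => f t * k) = rsum f * k.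
Proof. by apply: (big_ind2 (fun x y => x = y * k)) => [|? ? ? ? -> ->|//]; ring. Qed.

Lemma rsum_exchange (T' : finType) (F : T -> T' -> R) :
  rsum (fun t => rsum (F t)) = rsum (fun t' => rsum (fun t => F t t')).
Proof. exact: exchange_big. Qed.

Lemma rsum_pair (T' : finType) (F : T -> T' -> R) :
  rsum (fun t => rsum (F t)) = rsum (fun p : T * T' => F p.1 p.2).
Proof. exact: pair_big. Qed.

Lemma xsum_Fin F g : (forall t, F t = Fin (g t)) -> xsum F = Fin (rsum g).
Proof. by move=> Fg; apply: (big_ind2 (fun x y => x = Fin y)) => // ? ? ? ? -> ->. Qed.

Lemma xsum_MInf F t0 : F t0 = MInf -> xsum F = MInf.
Proof. by move=> Ft0; rewrite /xsum (bigD1 t0) //= Ft0. Qed.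

End FiniteSums.

Lemma xscale_xlog w x : (w <> 0 -> 0 < x) -> xscale w (xlog x) = Fin (w * ln x).
Proof.
rewrite /xscale /xlog; case: Req_EM_T => [w0 _|w0 x_gt0] /=; first by rewrite w0 Rmult_0_l.
by case: Rlt_dec => // x_le0; case: (x_le0 (x_gt0 w0)).
Qed.

Lemma xscale_xlog_MInf w x : w <> 0 -> x <= 0 -> xscale w (xlog x) = MInf.
Proof.
rewrite /xscale /xlog => w0 x_le0; case: Req_EM_T => [//|_] /=.
by case: Rlt_dec => [x_gt0|//]; lra.
Qed.

Lemma ln_lt_sub1 x : 0 < x -> x <> 1 -> ln x < x - 1.
Proof.
move=> x_gt0 x1; have ln_neq0 : ln x <> 0.
  by move=> ln0; apply: x1; rewrite -(exp_ln x x_gt0) ln0 exp_0.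
by have := exp_ineq1 (ln x) ln_neq0; rewrite exp_ln //; lra.
Qed.

(* Take x = f c / w in ln x < x - 1. *)
Lemma gibbs_term_lt w c f : 0 <= w -> 0 < c -> 0 <= f -> (0 < w -> 0 < f) ->
  f <> w / c -> w * ln f + w < w * ln (w / c) + c * f.
Proof.
move=> w_ge0 c_gt0 f_ge0 wf f_neq; case: (Rle_lt_or_eq_dec 0 w w_ge0) => [w_gt0|w0].
- have f_gt0 := wf w_gt0.
  have x_gt0 : 0 < f * c / w by apply: Rdiv_lt_0_compat; nra.
  have x_neq1 : f * c / w <> 1.
    move=> x1; apply: f_neq; have fc : f * c = w.
      by rewrite -[w]Rmult_1_l -x1; field; lra.
    by rewrite -fc; field; lra.
  have ln_x : ln (f * c / w) = ln f - ln (w / c).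
    rewrite /Rdiv !ln_mult ?ln_Rinv //; try apply: Rinv_0_lt_compat; try nra; lra.
  have := ln_lt_sub1 x_gt0 x_neq1; rewrite ln_x => lt_x.
  have -> : c * f = w * (f * c / w - 1) + w by field; lra.
  by have := Rmult_lt_compat_l w _ _ w_gt0 lt_x; lra.
- subst w; have f_gt0 : 0 < f.
    by case: (Rle_lt_or_eq_dec 0 f f_ge0) => // f0; case: f_neq; rewrite -f0 /Rdiv Rmult_0_l.
  by have := Rmult_lt_0_compat _ _ c_gt0 f_gt0; lra.
Qed.

Lemma gibbs_term_le w c f : 0 <= w -> 0 < c -> 0 <= f -> (0 < w -> 0 < f) ->
  w * ln f + w <= w * ln (w / c) + c * f.
Proof.
move=> w_ge0 c_gt0 f_ge0 wf; case: (Req_dec f (w / c)) => [->|f_neq].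
  by apply: Req_le; field; lra.
by apply: Rlt_le; apply: gibbs_term_lt.
Qed.

Lemma xsum_xscale_xlog_MInf (T : finType) (w f : T -> R) :
  ~ (forall t, 0 < w t -> 0 < f t) ->
  xsum (fun t => xscale (w t) (xlog (f t))) = MInf.
Proof.
move=> not_wf; have [t not_wft] := not_all_ex_not _ _ not_wf.
have [w_gt0 f_le0] := imply_to_and _ _ not_wft.
by apply: (@xsum_MInf _ _ t); apply: xscale_xlog_MInf; lra.
Qed.

Section Gibbs.
Variables (T : finType) (w c f : T -> R).
Hypotheses (w_ge0 : forall t, 0 <= w t) (c_gt0 : forall t, 0 < c t)
  (f_ge0 : forall t, 0 <= f t) (cf_le_w : rsum (fun t => c t * f t) <= rsum w).

Lemma gibbs_le : (forall t, 0 < w t -> 0 < f t) ->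
  rsum (fun t => w t * ln (f t)) <= rsum (fun t => w t * ln (w t / c t)).
Proof.
move=> wf; have := rsum_le (fun t => gibbs_term_le (w_ge0 t) (c_gt0 t) (f_ge0 t) (wf t)).
by move: cf_le_w; rewrite /rsum !big_split /=; lra.
Qed.

Lemma gibbs_lt : (forall t, 0 < w t -> 0 < f t) -> (exists t, f t <> w t / c t) ->
  rsum (fun t => w t * ln (f t)) < rsum (fun t => w t * ln (w t / c t)).
Proof.
move=> wf [t0 f_neq].
have := rsum_lt (fun t => gibbs_term_le (w_ge0 t) (c_gt0 t) (f_ge0 t) (wf t))
  (gibbs_term_lt (w_ge0 t0) (c_gt0 t0) (f_ge0 t0) (wf t0) f_neq).
by move: cf_le_w; rewrite /rsum !big_split /=; lra.
Qed.

Let xsum_gibbs_bound :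
  xsum (fun t => xscale (w t) (xlog (w t / c t))) = Fin (rsum (fun t => w t * ln (w t / c t))).
Proof.
apply: xsum_Fin => t; apply: xscale_xlog => w0.
by apply: Rdiv_lt_0_compat => //; have := w_ge0 t; lra.
Qed.

Let xsum_gibbs_Fin : (forall t, 0 < w t -> 0 < f t) ->
  xsum (fun t => xscale (w t) (xlog (f t))) = Fin (rsum (fun t => w t * ln (f t))).
Proof.
by move=> wf; apply: xsum_Fin => t; apply: xscale_xlog => w0; apply: wf; have := w_ge0 t; lra.
Qed.

Lemma xgibbs_le :
  xle (xsum (fun t => xscale (w t) (xlog (f t))))
      (xsum (fun t => xscale (w t) (xlog (w t / c t)))).
Proof.
case: (classic (forall t, 0 < w t -> 0 < f t)) => [wf|not_wf].
  by rewrite xsum_gibbs_bound xsum_gibbs_Fin //; apply: gibbs_le.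
by rewrite xsum_xscale_xlog_MInf.
Qed.

Lemma xgibbs_lt : (exists t, f t <> w t / c t) ->
  xlt (xsum (fun t => xscale (w t) (xlog (f t))))
      (xsum (fun t => xscale (w t) (xlog (w t / c t)))).
Proof.
move=> f_neq; rewrite xsum_gibbs_bound.
case: (classic (forall t, 0 < w t -> 0 < f t)) => [wf|not_wf].
  by rewrite xsum_gibbs_Fin //; apply: gibbs_lt.
by rewrite xsum_xscale_xlog_MInf.
Qed.

End Gibbs.

(* Alice's half of [stable]. *)
Definition alice_unique (TA TB TY : finType) (P : TA -> TB -> TY -> R) : Prop :=
  forall aa : TA -> TY -> R, (forall a, ProbVec (aa a)) ->
    (forall a b, score P (aa a) (pB P b) = K P a b) -> forall a, aa a = pA P a.

Section Prior.
Variables (TA TB TY : finType) (P : TA -> TB -> TY -> R).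
Hypotheses (P_ge0 : forall a b y, 0 <= P a b y) (marg : positive_marginals P)
  (indep : cond_indep P).

Let PA_gt0 a : 0 < PA P a. Proof. exact: marg.1. Qed.
Let PB_gt0 b : 0 < PB P b. Proof. exact: marg.2.1. Qed.
Let PY_gt0 y : 0 < PY P y. Proof. exact: marg.2.2. Qed.

Lemma PAB_ge0 a b : 0 <= PAB P a b.
Proof. exact: rsum_ge0. Qed.

Lemma rsum_PAY a : rsum (fun y => PAY P a y) = PA P a.
Proof. exact: rsum_exchange. Qed.

Lemma rsum_PBY y : rsum (fun b => PBY P b y) = PY P y.
Proof. exact: rsum_exchange. Qed.

Lemma pA_ProbVec a : ProbVec (pA P a).
Proof.
split=> [y|]; first by apply: Rle_mult_inv_pos => //; apply: rsum_ge0.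
by rewrite /pA /Rdiv rsum_mulr rsum_PAY; field; have := PA_gt0 a; lra.
Qed.

Lemma pB_ge0 b y : 0 <= pB P b y.
Proof. by apply: Rle_mult_inv_pos => //; apply: rsum_ge0. Qed.

Lemma K_cond a b : K P a b = PAB P a b / PA P a / PB P b.
Proof. by rewrite /K; field; have := PA_gt0 a; have := PB_gt0 b; lra. Qed.

Lemma score_truthful a b : score P (pA P a) (pB P b) = K P a b.
Proof.
rewrite /K /PAB [in RHS]/Rdiv -(rsum_mulr (P a b)); apply: eq_bigr => y _.
have := PA_gt0 a; have := PB_gt0 b; have := PY_gt0 y => *.
have -> : P a b y = PAY P a y * PBY P b y / PY P y by rewrite -indep; field; lra.
by rewrite /pA /pB; field; lra.
Qed.

Lemma score_pB_avg (q : TY -> R) :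
  rsum (fun b => PB P b * score P q (pB P b)) = rsum q.
Proof.
transitivity (rsum (fun b => rsum (fun y => PBY P b y * (q y / PY P y)))).
  apply: eq_bigr => b _; rewrite /score Rmult_comm -rsum_mulr; apply: eq_bigr => y _.
  by rewrite /pB; field; have := PB_gt0 b; have := PY_gt0 y; lra.
rewrite rsum_exchange; apply: eq_bigr => y _.
by rewrite rsum_mulr rsum_PBY; field; have := PY_gt0 y; lra.
Qed.

Lemma ExpPayA_truthful a :
  ExpPayA P a (pA P a) =
  xsum (fun b => xscale (PAB P a b / PA P a) (xlog (PAB P a b / PA P a / PB P b))).
Proof. by apply: eq_bigr => b _; rewrite /payment score_truthful K_cond. Qed.

Let gibbs_hyps a q : ProbVec q ->
  [/\ forall b, 0 <= PAB P a b / PA P a,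
      forall b, 0 <= score P q (pB P b)
    & rsum (fun b => PB P b * score P q (pB P b)) <= rsum (fun b => PAB P a b / PA P a)].
Proof.
move=> [q_ge0 q_sum]; split=> [b|b|].
- by apply: Rle_mult_inv_pos; [exact: PAB_ge0 | exact: PA_gt0].
- apply: rsum_ge0 => y; apply: Rle_mult_inv_pos => //.
  by apply: Rmult_le_pos => //; apply: pB_ge0.
- rewrite score_pB_avg q_sum /Rdiv rsum_mulr.
  have -> : rsum (fun b => PAB P a b) = PA P a by [].
  by apply: Req_le; field; have := PA_gt0 a; lra.
Qed.

Lemma ExpPayA_le_truthful a q : ProbVec q -> xle (ExpPayA P a q) (ExpPayA P a (pA P a)).
Proof.
move=> q_prob; have [w_ge0 f_ge0 cf_le_w] := gibbs_hyps a q_prob.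
by rewrite ExpPayA_truthful; apply: xgibbs_le.
Qed.

Lemma ExpPayA_lt_truthful a q : ProbVec q -> (exists b, score P q (pB P b) <> K P a b) ->
  xlt (ExpPayA P a q) (ExpPayA P a (pA P a)).
Proof.
move=> q_prob [b score_neq]; have [w_ge0 f_ge0 cf_le_w] := gibbs_hyps a q_prob.
by rewrite ExpPayA_truthful; apply: xgibbs_lt => //; exists b; rewrite -K_cond.
Qed.

(* Alice reporting q and everyone else truthful is a solution of the stability
   system, so uniqueness forces q = pA a unless some equation fails. *)
Lemma alice_unique_score_neq a q : alice_unique P -> ProbVec q -> q <> pA P a ->
  exists b, score P q (pB P b) <> K P a b.
Proof.
move=> uniq q_prob q_neq; apply: NNPP => all_eq; apply: q_neq.
have := uniq (fun a' => if a' == a then q else pA P a') _ _ a; rewrite eqxx; apply.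
  by move=> a'; case: (a' == a) => //; exact: pA_ProbVec.
move=> a' b; case: (a' =P a) => [->|_]; last exact: score_truthful.
by apply: NNPP => neq; apply: all_eq; exists b.
Qed.

Lemma ExpPayTruthful_MI : ExpPayTruthful P = Fin (MI P).
Proof.
apply: xsum_Fin => a; apply: xsum_Fin => b.
rewrite /payment score_truthful; apply: xscale_xlog => PAB_neq0.
apply: Rdiv_lt_0_compat; first by have := PAB_ge0 a b; lra.
exact: Rmult_lt_0_compat.
Qed.

(* Gibbs' inequality on TA * TB with weights PAB, c = PA * PB and f = 1. *)
Lemma MI_ge0 : rsum (fun a => PA P a) = 1 -> 0 <= MI P.
Proof.
move=> total.
have total_B : rsum (fun b => PB P b) = 1 by rewrite -total; exact: rsum_exchange.
have cf_sum : rsum (fun p : TA * TB => PA P p.1 * PB P p.2 * 1) = 1.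
  rewrite -(rsum_pair (fun a b => PA P a * PB P b * 1)).
  transitivity (rsum (fun a => PA P a * rsum (fun b => PB P b))).
    by apply: eq_bigr => a _; rewrite Rmult_comm -rsum_mulr; apply: eq_bigr => b _; ring.
  by rewrite total_B rsum_mulr total Rmult_1_r.
have w_sum : rsum (fun p : TA * TB => PAB P p.1 p.2) = 1 by rewrite -rsum_pair.
have := @gibbs_le _ (fun p => PAB P p.1 p.2) (fun p => PA P p.1 * PB P p.2) (fun _ => 1)
  (fun p => PAB_ge0 p.1 p.2) (fun p => Rmult_lt_0_compat _ _ (PA_gt0 p.1) (PB_gt0 p.2))
  (fun _ => Rle_0_1) (Req_le _ _ (etrans cf_sum (esym w_sum))) (fun _ _ => Rlt_0_1).
by rewrite rsum_mulr ln_1 Rmult_0_r /MI rsum_pair.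
Qed.

End Prior.

Definition swap_prior (TA TB TY : finType) (P : TA -> TB -> TY -> R) : TB -> TA -> TY -> R :=
  fun b a y => P a b y.

Section Swap.
Variables (TA TB TY : finType) (P : TA -> TB -> TY -> R).

Lemma PY_swap y : PY (swap_prior P) y = PY P y.
Proof. exact: rsum_exchange. Qed.

Lemma score_swap q r : score (swap_prior P) q r = score P r q.
Proof. by apply: eq_bigr => y _; rewrite PY_swap Rmult_comm. Qed.

Lemma K_swap a b : K (swap_prior P) b a = K P a b.
Proof. by rewrite /K Rmult_comm. Qed.

Lemma ExpPayB_swap b q : ExpPayB P b q = ExpPayA (swap_prior P) b q.
Proof. by apply: eq_bigr => a _; rewrite /payment score_swap. Qed.

Lemma positive_marginals_swap : positive_marginals P -> positive_marginals (swap_prior P).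
Proof. by move=> [PA_gt0 [PB_gt0 PY_gt0]]; split=> //; split=> // y; rewrite PY_swap. Qed.

Lemma cond_indep_swap : cond_indep P -> cond_indep (swap_prior P).
Proof. by move=> indep b a y; rewrite PY_swap indep Rmult_comm. Qed.

Lemma stable_alice_unique : stable P -> alice_unique P.
Proof. by case=> _ []. Qed.

Lemma stable_bob_unique : stable P -> alice_unique (swap_prior P).
Proof.
move=> [[_ bob_unique] _] bb bb_prob bb_K b; apply: bob_unique bb_prob _ b => a b'.
by rewrite -score_swap -K_swap; exact: bb_K.
Qed.

End Swap.

Theorem mainTheorem6 (TA TB TY : finType) (P : TA -> TB -> TY -> R) :
  is_prior P -> positive_marginals P -> cond_indep P ->
  ((forall (a : TA) (q : TY -> R), ProbVec q ->
      xle (ExpPayA P a q) (ExpPayA P a (pA P a))) /\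
   (forall (b : TB) (q : TY -> R), ProbVec q ->
      xle (ExpPayB P b q) (ExpPayB P b (pB P b)))) /\
  (stable P ->
   (forall (a : TA) (q : TY -> R), ProbVec q -> q <> pA P a ->
      xlt (ExpPayA P a q) (ExpPayA P a (pA P a))) /\
   (forall (b : TB) (q : TY -> R), ProbVec q -> q <> pB P b ->
      xlt (ExpPayB P b q) (ExpPayB P b (pB P b)))) /\
  (ExpPayTruthful P = Fin (MI P) /\ 0 <= MI P).
Proof.
move=> [P_ge0 total] marg indep.
have P_ge0' : forall b a y, 0 <= swap_prior P b a y by move=> b a y; exact: P_ge0.
have marg' := positive_marginals_swap marg.
have indep' := cond_indep_swap indep.
split; [split | split].
- exact: ExpPayA_le_truthful.
- by move=> b q q_prob; rewrite !ExpPayB_swap; exact: ExpPayA_le_truthful.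
- move=> stab; split=> [a q q_prob q_neq | b q q_prob q_neq].
    apply: ExpPayA_lt_truthful => //.
    exact: alice_unique_score_neq (stable_alice_unique stab) q_prob q_neq.
  rewrite !ExpPayB_swap; apply: ExpPayA_lt_truthful => //.
  exact: alice_unique_score_neq (stable_bob_unique stab) q_prob q_neq.
- by split; [exact: ExpPayTruthful_MI | exact: MI_ge0].
Qed.
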